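(* Let $p$ be a prime, let $G,H$ be finite groups, and let $U\leq G\times H$ be a subdirect product. Write $K=k_1(U)$ and $q(U)=G/K$. Then $U$ is $p$-extensible if one of the following conditions holds: (i) the $p$-primary part of the Schur multiplier $M(q(U))=H_2(q(U),\mathbb{Z})$ is trivial; (ii) the $p$-primary component of the coinflation map $\alpha: H_2(G,\mathbb{Z})\to H_2(G/K,\mathbb{Z})$ is surjective.
   Context: For finite groups $G,H$ and $U\leq G\times H$: $p_1(U)=\{g\in G:\exists h,(g,h)\in U\}$, $p_2(U)=\{h\in H:\exists g,(g,h)\in U\}$, $k_1(U)=\{g\in G:(g,1)\in U\}$, $k_2(U)=\{h\in H:(1,h)\in U\}$. $U$ is a subdirect product if $p_1(U)=G$ and $p_2(U)=H$. The Goursat quotient is $q(U)=p_1(U)/k_1(U)$ (isomorphic to $p_2(U)/k_2(U)$). An abelian group $A$ satisfies the Hypothesis (with set of primes $\pi$) if there is a unique set of primes $\pi$ such that for every $n\in\mathbb{N}$ the $n$-torsion part of $A$ is cyclic of order $n_\pi$ (the $\pi$-part of $n$). $U$ is $A$-extensible if every homomorphism $U\to A$ extends to a homomorphism $G\times H\to A$. $U$ is $p$-extensible if it is $A$-extensible for every abelian group $A$ satisfying the Hypothesis with $\pi=\{p\}$. The coinflation map is the first map $\alpha$ in the five-term exact sequence $H_2(G)\xrightarrow{\alpha} H_2(G/K)\to H_1(K)_{G/K}\to H_1(G)\to H_1(G/K)\to 0$ of the extension $1\to K\to G\to G/K\to 1$ (induced by the projection $G\to G/K$); homology is with integer coefficients.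 *)

From HB Require Import structures.
From mathcomp Require Import all_boot all_order all_algebra all_fingroup all_solvable.
Set Implicit Arguments. Unset Strict Implicit. Unset Printing Implicit Defensive.
Import GRing.Theory.
Local Open Scope group_scope.

Definition k1 (gT1 gT2 : finGroupType) (U : {set gT1 * gT2}) : {set gT1} :=
  [set g | (g, 1) \in U].

(* ---------- Integral group homology H_2 via the (inhomogeneous) bar complex ----------
   For a subgroup Q of a finGroupType T:
   C_n(Q) = free abelian group on Q^n, represented as integer-valued functions on T^n
   supported in Q^n.
   d2 [g|h]   = [h] - [gh] + [g]
   d3 [g|h|k] = [h|k] - [gh|k] + [g|hk] - [g|h]
   H_2(Q; Z) = ker d2 / im d3. *)

Definition chain1 (T : finGroupType) := {ffun T -> int}.
Definition chain2 (T : finGroupType) := {ffun T * T -> int}.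
Definition chain3 (T : finGroupType) := {ffun T * T * T -> int}.

Definition bar_d2 (T : finGroupType) (c : chain2 T) : chain1 T :=
  [ffun x : T => (\sum_(gh : T * T)
     c gh * ((gh.2 == x)%:R - ((gh.1 * gh.2)%g == x)%:R + (gh.1 == x)%:R))%R].

Definition bar_d3 (T : finGroupType) (c : chain3 T) : chain2 T :=
  [ffun xy : T * T => (\sum_(t : T * T * T)
     c t * ((((t.1.2, t.2) == xy))%:R - ((((t.1.1 * t.1.2)%g, t.2) == xy))%:R
            + (((t.1.1, (t.1.2 * t.2)%g) == xy))%:R - (((t.1.1, t.1.2) == xy))%:R))%R].

Definition supp2 (T : finGroupType) (Q : {set T}) (c : chain2 T) : Prop :=
  forall gh : T * T, (c gh != 0)%R -> (gh.1 \in Q) && (gh.2 \in Q).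

Definition supp3 (T : finGroupType) (Q : {set T}) (c : chain3 T) : Prop :=
  forall t : T * T * T, (c t != 0)%R -> [&& t.1.1 \in Q, t.1.2 \in Q & t.2 \in Q].

Definition cycle2 (T : finGroupType) (Q : {set T}) (c : chain2 T) : Prop :=
  supp2 Q c /\ bar_d2 c = 0%R.

Definition boundary2 (T : finGroupType) (Q : {set T}) (c : chain2 T) : Prop :=
  exists b : chain3 T, supp3 Q b /\ bar_d3 b = c.

Definition p_primary_class (p : nat) (T : finGroupType) (Q : {set T}) (z : chain2 T)
  : Prop := exists k : nat, boundary2 Q (z *+ (p ^ k))%R.

Definition H2_p_part_trivial (p : nat) (T : finGroupType) (Q : {set T}) : Prop :=
  forall z : chain2 T, cycle2 Q z -> p_primary_class p Q z -> boundary2 Q z.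

Definition chain2_map (T T' : finGroupType) (f : T -> T') (c : chain2 T) : chain2 T' :=
  [ffun xy : T' * T' => (\sum_(gh : T * T | (f gh.1, f gh.2) == xy) c gh)%R].

Definition coinflation_p_surjective (p : nat) (gT : finGroupType)
  (G : {group gT}) (K : {set gT}) : Prop :=
  forall w : chain2 (coset_of K),
    cycle2 (G / K) w -> p_primary_class p (G / K) w ->
    exists z : chain2 gT,
      [/\ cycle2 G z, p_primary_class p G z &
          boundary2 (G / K) (chain2_map (coset K) z - w)%R].

(* A satisfies the Hypothesis with pi = {p}: for every n >= 1 the n-torsion
   {a | n a = 0} of A is cyclic of order n_p *)
Definition hypothesis_p (p : nat) (A : zmodType) : Prop :=
  forall n : nat, 0 < n ->
    exists a : A,
      (forall x : A, (x *+ n = 0)%R <-> exists k : nat, x = (a *+ k)%R) /\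
      (a *+ (n`_p) = 0)%R /\ (forall k : nat, 0 < k < n`_p -> (a *+ k != 0)%R).

Definition hom_on (gT : finGroupType) (A : zmodType) (D : {set gT}) (f : gT -> A) : Prop :=
  {in D &, forall x y, f (x * y) = (f x + f y)%R}.

Definition A_extensible (A : zmodType) (gT1 gT2 : finGroupType)
  (G : {group gT1}) (H : {group gT2}) (U : {group gT1 * gT2}) : Prop :=
  forall f : gT1 * gT2 -> A, hom_on U f ->
    exists F : gT1 * gT2 -> A, hom_on (setX G H) F /\ {in U, F =1 f}.

Definition p_extensible (p : nat) (gT1 gT2 : finGroupType)
  (G : {group gT1}) (H : {group gT2}) (U : {group gT1 * gT2}) : Prop :=
  forall A : zmodType, hypothesis_p p A -> A_extensible A G H U.

From HB Require Import structures.
From mathcomp Require Import all_boot all_order all_algebra all_fingroup all_solvable.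
From mathcomp Require Import ring zify.
Set Implicit Arguments. Unset Strict Implicit. Unset Printing Implicit Defensive.
Import GRing.Theory.

(* Let f : U -> A be a homomorphism, K = k1(U) and phi k = f (k, 1); phi is a
   G-invariant homomorphism K -> A.  Once phi vanishes on K :&: G', it extends
   to K G' by killing G', and then to G one cyclic step at a time: an element
   of A of finite order is divisible by every n, since the torsion of A is
   locally cyclic and p-primary.  If F is such an extension, then
   (g, h) |-> F g + (f (g', h) - F g') for any (g', h) in U extends f.
   To see that phi vanishes on K :&: G', write k in K :&: G' as the boundary
   of a 2-chain z of G up to the base point.  The image w of z in G/K is a
   2-cycle on which the 2-cocycle of G/K obtained by transgressing phi takes
   the value -phi k.  The multiple of w by the p'-part of |G/K| is p-primary,
   so by (i) it is a boundary and by (ii) it is homologous to the image of a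
   2-cycle of G; the cocycle vanishes on both.  Hence phi k is killed by a
   p'-number, and also by the p-part of |K|, so phi k = 0. *)

Local Open Scope ring_scope.

(** * Torsion of groups satisfying the Hypothesis *)

Section NatMul.
Variable A : zmodType.

Lemma natmul_order_dvd (g : A) (P t : nat) : (0 < P)%N -> g *+ P = 0 ->
  (forall k : nat, (0 < k < P)%N -> g *+ k != 0) -> g *+ t = 0 -> (P %| t)%N.
Proof.
move=> P_gt0 gP gk gt; apply/negPn/negP => P_ndvd_t.
have: g *+ (t %% P) = 0.
  by move: gt; rewrite {1}(divn_eq t P) mulrnDr mulnC mulrnA gP mul0rn add0r.
by apply/eqP/gk; rewrite lt0n P_ndvd_t ltn_pmod.
Qed.

Lemma natmul_coprime_eq0 (x : A) (m n : nat) : (0 < m)%N -> coprime m n ->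
  x *+ m = 0 -> x *+ n = 0 -> x = 0.
Proof.
move=> m_gt0 /eqP co_mn xm xn; have [u v def_um _] := egcdnP n m_gt0.
rewrite co_mn in def_um.
have: x *+ (u * m) = x *+ (v * n + 1) by rewrite def_um.
by rewrite mulrnDr !(mulnC _ m) !(mulnC _ n) !mulrnA xm xn !mul0rn add0r.
Qed.

End NatMul.

Section HypothesisP.
Variables (p : nat) (A : zmodType).
Hypothesis hA : hypothesis_p p A.

Lemma torsion_p_part (x : A) (N : nat) : (0 < N)%N -> x *+ N = 0 -> x *+ N`_p = 0.
Proof.
move=> N_gt0 xN; have [a [tor [aP _]]] := hA N_gt0.
have [j ->] := (tor x).1 xN.
by rewrite -mulrnA mulnC mulrnA aP mul0rn.
Qed.

(* The (N * n)-torsion is cyclic of order P = N_p * n_p; an element of it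
   killed by N is a multiple of n_p, and n_p' is invertible modulo P. *)
Lemma torsion_divisible (b : A) (N n : nat) : (0 < N)%N -> (0 < n)%N ->
  b *+ N = 0 -> exists a : A, a *+ n = b.
Proof.
move=> N_gt0 n_gt0 bN.
have Nn_gt0 : (0 < N * n)%N by rewrite muln_gt0 N_gt0.
have [g [tor [gP gk]]] := hA Nn_gt0.
have P_gt0 : (0 < (N * n)`_p)%N := part_gt0 p _.
have [k def_b] : exists k : nat, b = g *+ k by apply/tor; rewrite mulrnA bN mul0rn.
have P_dvd_kN : ((N * n)`_p %| k * N)%N.
  by apply: (natmul_order_dvd P_gt0 gP gk); rewrite mulrnA -def_b.
have [j def_k] : exists j : nat, k = (j * n`_p)%N.
  apply/dvdnP; rewrite -(Gauss_dvdl k (pnat_coprime (part_pnat p n) (part_pnat p^' N))).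
  rewrite -(dvdn_pmul2l (part_gt0 p N)) mulnCA partnC //.
  by rewrite -partnM.
have co_P : coprime n`_p^' (N * n)`_p.
  by rewrite coprime_sym (pnat_coprime (part_pnat p _) (part_pnat p^' n)).
have [u v def_u _] := egcdnP (N * n)`_p (part_gt0 p^' n).
rewrite (eqP co_P) in def_u.
exists (g *+ (u * j)); rewrite -mulrnA def_b def_k -{1}(partnC p n_gt0).
have -> : (u * j * (n`_p * n`_p^'))%N = ((N * n)`_p * (j * n`_p * v) + j * n`_p)%N.
  rewrite (_ : u * j * (n`_p * n`_p^') = j * n`_p * (u * n`_p^'))%N; last by ring.
  by rewrite def_u; ring.
by rewrite mulrnDr mulrnA gP mul0rn add0r.
Qed.
End HypothesisP.

Local Open Scope group_scope.

(** * Extending homomorphisms into A *)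

Section HomOn.
Variables (gT : finGroupType) (A : zmodType) (M : {group gT}) (th : gT -> A).
Hypothesis hth : hom_on M th.

Lemma hom_on1 : th 1 = 0.
Proof. by apply/(addrI (th 1)); rewrite -hth ?mulg1 ?addr0. Qed.

Lemma hom_onV x : x \in M -> th x^-1 = - th x.
Proof. by move=> xM; apply/(addrI (th x)); rewrite -hth ?groupV // mulgV hom_on1 subrr. Qed.

Lemma hom_onX x n : x \in M -> th (x ^+ n) = th x *+ n.
Proof.
move=> xM; elim: n => [|n IHn]; first by rewrite expg0 hom_on1.
by rewrite expgS hth ?groupX // IHn mulrS.
Qed.

Lemma hom_on_natmul_card x : x \in M -> th x *+ #|M| = 0.
Proof. by move=> xM; rewrite -hom_onX // expg_cardG // hom_on1. Qed.

Lemma hom_onJ x y : x \in M -> y \in M -> th (x ^ y) = th x.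
Proof.
by move=> xM yM; rewrite /conjg !hth ?groupM ?groupV // hom_onV // addrCA addNr addr0.
Qed.

End HomOn.

Section ExtendAcrossCycle.
Variables (A : zmodType) (gT : finGroupType) (G M : {group gT}) (th : gT -> A).
Variable x : gT.
Hypotheses (sMG : M \subset G) (sG'M : G^`(1) \subset M) (xG : x \in G).
Hypotheses (hth : hom_on M th) (th_G' : {in G^`(1), forall c, th c = 0}).

Let nMG : M <| G := sub_der1_normal sG'M sMG.

Lemma hom_on_conjG m g : m \in M -> g \in G -> th (m ^ g) = th m.
Proof.
move=> mM gG; have mgG' : [~ m, g] \in G^`(1).
  by rewrite derg1; apply: mem_commg (subsetP sMG _ mM) gG.
by rewrite conjg_mulR hth ?(th_G' mgG') ?addr0 // (subsetP sG'M _ mgG').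
Qed.

Let n := #[coset M x].

Lemma expg_mem_normal t : (x ^+ t \in M) = (n %| t)%N.
Proof.
have xN : x \in 'N(M) by rewrite (subsetP (normal_norm nMG)).
rewrite order_dvdn -morphX //=; apply/idP/eqP; first exact: coset_id.
by move/coset_idr; apply; rewrite groupX.
Qed.

Variable a : A.
Hypothesis def_a : a *+ n = th (x ^+ n).

Lemma hom_on_expg t : x ^+ t \in M -> th (x ^+ t) = a *+ t.
Proof.
rewrite expg_mem_normal => /dvdnP[j ->].
by rewrite mulnC expgM (hom_onX hth) ?expg_mem_normal // -def_a -mulrnA.
Qed.

(* y = m * x ^+ i with m in M is sent to th m + a *+ i: [a] is the image of x. *)
Definition extend_cycle (y : gT) : A :=
  if [pick i : 'I_#[x] | y * (x ^+ i)^-1 \in M] is Some i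
  then th (y * (x ^+ i)^-1) + a *+ i else 0.

Lemma extend_cycle_indep y i j : y * (x ^+ i)^-1 \in M -> y * (x ^+ j)^-1 \in M ->
  th (y * (x ^+ i)^-1) + a *+ i = th (y * (x ^+ j)^-1) + a *+ j.
Proof.
wlog le_ij : i j / (i <= j)%N.
  by move=> W yi yj; case: (leqP i j) => [/W|/ltnW/W]; [apply | move=> e; rewrite e].
rewrite -(subnK le_ij); set d := (j - i)%N => yi yj.
have def_yi : y * (x ^+ i)^-1 = y * (x ^+ (d + i))^-1 * x ^+ d.
  by rewrite expgD invMg !mulgA mulgKV.
have xdM : x ^+ d \in M.
  by rewrite -(groupMl _ yj) -def_yi.
by rewrite def_yi hth // hom_on_expg // -addrA -mulrnDr addnC.
Qed.

Lemma extend_cycleE y i : y * (x ^+ i)^-1 \in M ->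
  extend_cycle y = th (y * (x ^+ i)^-1) + a *+ i.
Proof.
rewrite /extend_cycle => yi; case: pickP => [j yj | none]; first exact: extend_cycle_indep.
have := none (Ordinal (ltn_pmod i (order_gt0 x))).
by rewrite /= expg_mod_order yi.
Qed.

Lemma hom_on_extend_cycle : hom_on (M <*> <[x]>) extend_cycle.
Proof.
have xN : x \in 'N(M) by rewrite (subsetP (normal_norm nMG)).
have decomp y : y \in M <*> <[x]> -> exists i : nat, y * (x ^+ i)^-1 \in M.
  rewrite norm_joinEr ?cycle_subG // => /mulsgP[m _ mM /cycleP[i ->] ->].
  by exists i; rewrite mulgK.
move=> y1 y2 /decomp[i1 y1M] /decomp[i2 y2M].
set m1 := y1 * _ in y1M *; set m2 := y2 * _ in y2M *.
have def_y12 : y1 * y2 * (x ^+ (i1 + i2))^-1 = m1 * m2 ^ (x ^+ i1)^-1.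
  by rewrite /m1 /m2 expgD invMg /conjg invgK !mulgA !mulgKV.
have m2J : m2 ^ (x ^+ i1)^-1 \in M by rewrite memJ_norm // groupV groupX.
rewrite (extend_cycleE y1M) (extend_cycleE y2M) (extend_cycleE (i := i1 + i2)).
  by rewrite def_y12 hth // hom_on_conjG ?groupV ?groupX // mulrnDr addrACA.
by rewrite def_y12 groupM.
Qed.

Lemma extend_cycle_id : {in M, extend_cycle =1 th}.
Proof. by move=> y yM; rewrite (extend_cycleE (i := 0)) expg0 invg1 mulg1 ?addr0. Qed.

End ExtendAcrossCycle.

Lemma hom_on_extend_der1 p (A : zmodType) (gT : finGroupType) (G M : {group gT})
    (th : gT -> A) :
  hypothesis_p p A -> M \subset G -> G^`(1) \subset M -> hom_on M th ->
  {in G^`(1), forall c, th c = 0} ->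
  exists F : gT -> A, hom_on G F /\ {in M, F =1 th}.
Proof.
move=> hA; have [k] := ubnP (#|G| - #|M|); elim: k => // k IHk in M th *.
move=> lt_k sMG sG'M hth th_G'.
have [sGM | /subsetPn[x xG notMx]] := boolP (G \subset M).
  have eqMG : M :=: G by apply/eqP; rewrite eqEsubset sMG.
  by exists th; rewrite -eqMG.
have xnM : x ^+ #[coset M x] \in M by rewrite (expg_mem_normal sMG sG'M xG).
have [a def_a] := torsion_divisible hA (cardG_gt0 M) (order_gt0 (coset M x))
  (hom_on_natmul_card hth xnM).
set J := (M <*> <[x]>)%G.
have sMJ : M \subset J := joing_subl _ _.
have sJG : J \subset G by rewrite join_subG sMG cycle_subG.
have xJ : x \in J := subsetP (joing_subr _ _) _ (cycle_id x).
have ltMJ : (#|M| < #|J|)%N by apply/proper_card/properP; split; last exists x.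
have lt_k' : (#|G| - #|J| < k)%N by have := subset_leq_card sJG; lia.
have ext_id := extend_cycle_id sMG sG'M xG hth def_a.
have [|F [hF FJ]] := IHk J _ lt_k' sJG (subset_trans sG'M sMJ)
  (hom_on_extend_cycle sMG sG'M xG hth th_G' def_a).
  by move=> c cG'; rewrite ext_id ?th_G' ?(subsetP sG'M).
by exists F; split=> // y yM; rewrite FJ ?ext_id ?(subsetP sMJ).
Qed.

Section ExtendAcrossNormal.
Variables (A : zmodType) (gT : finGroupType) (K D : {group gT}) (phi : gT -> A).
Hypotheses (nDK : K \subset 'N(D)) (hphi : hom_on K phi).
Hypothesis phi_D : {in K :&: D, forall k, phi k = 0}.

Definition extend_normal (y : gT) : A :=
  if [pick k in K | k^-1 * y \in D] is Some k then phi k else 0.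

Lemma extend_normalE y k : k \in K -> k^-1 * y \in D -> extend_normal y = phi k.
Proof.
move=> kK kyD; rewrite /extend_normal; case: pickP => [k' /andP[k'K k'yD] | /(_ k)].
  have kk'KD : k'^-1 * k \in K :&: D.
    rewrite inE groupM ?groupV //=.
    have -> : k'^-1 * k = (k'^-1 * y) * (k^-1 * y)^-1 by rewrite invMg invgK !mulgA mulgK.
    by rewrite groupM ?groupV.
  by rewrite -(mulKVg k' k) hphi ?(phi_D kk'KD) ?addr0 // groupM ?groupV.
by rewrite kK kyD.
Qed.

Lemma hom_on_extend_normal : hom_on (K <*> D) extend_normal.
Proof.
have decomp y : y \in K <*> D -> exists2 k, k \in K & k^-1 * y \in D.
  by rewrite norm_joinEl // => /mulsgP[k c kK cD ->]; exists k; rewrite ?mulKg.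
move=> y1 y2 /decomp[k1 k1K c1D] /decomp[k2 k2K c2D].
rewrite (extend_normalE k1K c1D) (extend_normalE k2K c2D) -hphi //.
apply: extend_normalE; first by rewrite groupM.
have -> : (k1 * k2)^-1 * (y1 * y2) = (k1^-1 * y1) ^ k2 * (k2^-1 * y2).
  by rewrite /conjg invMg !mulgA mulgK.
by rewrite groupM // memJ_norm // (subsetP nDK).
Qed.

Lemma extend_normal_id : {in K, extend_normal =1 phi}.
Proof. by move=> k kK; rewrite (extend_normalE kK) ?mulVg. Qed.

Lemma extend_normal_eq0 : {in D, forall c, extend_normal c = 0}.
Proof. by move=> c cD; rewrite (extend_normalE (group1 K)) ?invg1 ?mul1g ?(hom_on1 hphi). Qed.

End ExtendAcrossNormal.

Lemma hom_on_extend p (A : zmodType) (gT : finGroupType) (G K : {group gT})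
    (phi : gT -> A) :
  hypothesis_p p A -> K \subset G -> hom_on K phi ->
  {in K :&: G^`(1), forall k, phi k = 0} ->
  exists F : gT -> A, hom_on G F /\ {in K, F =1 phi}.
Proof.
move=> hA sKG hphi phi_G'.
have nG'K : K \subset 'N(G^`(1)) := subset_trans sKG (der_norm 1 G).
have sJG : K <*> G^`(1) \subset G by rewrite join_subG sKG der_sub.
have [F [hF FJ]] := hom_on_extend_der1 hA sJG (joing_subr _ _)
  (hom_on_extend_normal nG'K hphi phi_G') (extend_normal_eq0 hphi phi_G').
by exists F; split=> // k kK; rewrite FJ ?extend_normal_id // (subsetP (joing_subl _ _)).
Qed.

(** * Chains of the bar complex *)

Section Pairing.
Variables (I : finType) (V : zmodType).

Definition pairing (F : I -> V) (c : {ffun I -> int}) : V := \sum_i F i *~ c i.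

Lemma pairing_is_zmod_morphism F : zmod_morphism (pairing F).
Proof.
by move=> c c'; rewrite /pairing -sumrB; apply: eq_bigr => i _; rewrite !ffunE mulrzBr.
Qed.

HB.instance Definition _ F :=
  GRing.isZmodMorphism.Build _ _ (pairing F) (pairing_is_zmod_morphism F).

Definition chain_delta (v : I) : {ffun I -> int} := [ffun i => (v == i)%:R].

Lemma pairing_delta F v : pairing F (chain_delta v) = F v.
Proof.
rewrite /pairing (bigD1 v) //= ffunE eqxx mulr1z big1 ?addr0 // => i /negbTE.
by rewrite ffunE eq_sym => ->; rewrite mulr0z.
Qed.

Lemma eq_pairing (P : pred I) F F' (c : {ffun I -> int}) : (forall i, c i != 0 -> P i) ->
  {in P, F =1 F'} -> pairing F c = pairing F' c.
Proof.
move=> cP eqF; apply: eq_bigr => i _.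
by have [-> | /cP/eqF ->] := eqVneq (c i) 0; rewrite ?mulr0z.
Qed.

Lemma pairing_sumF (J : finType) (P : pred J) (F : J -> I -> V) c :
  pairing (fun i => \sum_(j | P j) F j i) c = \sum_(j | P j) pairing (F j) c.
Proof. by rewrite exchange_big; apply: eq_bigr => i _; rewrite mulrz_suml. Qed.

Lemma pairingBF F F' c : pairing (fun i => F i - F' i) c = pairing F c - pairing F' c.
Proof. by rewrite -sumrB; apply: eq_bigr => i _; rewrite mulrzBl. Qed.

End Pairing.

Lemma pairingMF (I : finType) (a : int) (F : I -> int) c :
  pairing (fun i => (a * F i)%R) c = (a * pairing F c)%R.
Proof. by rewrite mulr_sumr; apply: eq_bigr => i _; rewrite !mulrzz mulrA. Qed.

Lemma pairing_indicator (I : finType) (c : {ffun I -> int}) v :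
  pairing (fun i => (v == i)%:R) c = c v.
Proof.
rewrite /pairing (bigD1 v) //= eqxx mulrzz mul1r big1 ?addr0 // => i.
by rewrite eq_sym => /negbTE ->; rewrite mul0rz.
Qed.

Lemma sum_chain_delta (I : finType) (c : {ffun I -> int}) :
  \sum_i chain_delta i *~ c i = c.
Proof.
apply/ffunP => v; rewrite -[RHS]pairing_indicator /pairing sum_ffunE.
by apply: eq_bigr => i _; rewrite ffunMzE ffunE eq_sym.
Qed.

Lemma pairing_adjoint (I J : finType) (V : zmodType) (F : J -> V)
    (phi : {additive {ffun I -> int} -> {ffun J -> int}}) c :
  pairing F (phi c) = pairing (fun i => pairing F (phi (chain_delta i))) c.
Proof. by rewrite -{1}(sum_chain_delta c) !raddf_sum; apply: eq_bigr => i _; rewrite !raddfMz. Qed.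

Section BarComplex.
Variable T : finGroupType.

Lemma bar_d2E (z : chain2 T) x :
  bar_d2 z x = pairing (fun gh => (gh.2 == x)%:R - (gh.1 * gh.2 == x)%:R + (gh.1 == x)%:R) z.
Proof. by rewrite ffunE; apply: eq_bigr => gh _; rewrite mulrzz mulrC. Qed.

Lemma bar_d3E (b : chain3 T) xy :
  bar_d3 b xy = pairing (fun t => ((t.1.2, t.2) == xy)%:R - ((t.1.1 * t.1.2, t.2) == xy)%:R
    + ((t.1.1, t.1.2 * t.2) == xy)%:R - ((t.1.1, t.1.2) == xy)%:R) b.
Proof. by rewrite ffunE; apply: eq_bigr => t _; rewrite mulrzz mulrC. Qed.

Lemma bar_d2_is_zmod_morphism : zmod_morphism (@bar_d2 T).
Proof.
move=> z z'; apply/ffunP => x; rewrite !ffunE -sumrB.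
by apply: eq_bigr => gh _; rewrite !ffunE mulrBl.
Qed.

HB.instance Definition _ :=
  GRing.isZmodMorphism.Build _ _ (@bar_d2 T) bar_d2_is_zmod_morphism.

Lemma bar_d2_delta (g h : T) :
  bar_d2 (chain_delta (g, h)) = chain_delta h - chain_delta (g * h) + chain_delta g.
Proof. by apply/ffunP => x; rewrite bar_d2E pairing_delta !ffunE. Qed.

Lemma bar_d3_is_zmod_morphism : zmod_morphism (@bar_d3 T).
Proof.
move=> b b'; apply/ffunP => xy; rewrite !ffunE -sumrB.
by apply: eq_bigr => t _; rewrite !ffunE mulrBl.
Qed.

HB.instance Definition _ :=
  GRing.isZmodMorphism.Build _ _ (@bar_d3 T) bar_d3_is_zmod_morphism.

Lemma bar_d3_delta (g h k : T) :
  bar_d3 (chain_delta (g, h, k)) = chain_delta (h, k) - chain_delta (g * h, k)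
    + chain_delta (g, h * k) - chain_delta (g, h).
Proof. by apply/ffunP => xy; rewrite bar_d3E pairing_delta !ffunE. Qed.

Lemma pairing_bar_d2 (V : zmodType) (F : T -> V) (z : chain2 T) :
  pairing F (bar_d2 z) = pairing (fun gh => F gh.2 - F (gh.1 * gh.2) + F gh.1) z.
Proof.
rewrite pairing_adjoint; apply: eq_bigr => -[g h] _.
by rewrite /= bar_d2_delta !raddfD raddfN /= !pairing_delta.
Qed.

Lemma pairing_bar_d3 (V : zmodType) (F : T * T -> V) (b : chain3 T) :
  pairing F (bar_d3 b) = pairing (fun t => F (t.1.2, t.2) - F (t.1.1 * t.1.2, t.2)
    + F (t.1.1, t.1.2 * t.2) - F (t.1.1, t.1.2)) b.
Proof.
rewrite pairing_adjoint; apply: eq_bigr => -[[g h] k] _.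
by rewrite /= bar_d3_delta !(raddfB, raddfD) /= !pairing_delta.
Qed.

End BarComplex.

Section ChainMap.
Variables (T T' : finGroupType) (f : T -> T').

Lemma chain2_map_is_zmod_morphism : zmod_morphism (chain2_map f).
Proof.
move=> z z'; apply/ffunP => xy; rewrite !ffunE -sumrB.
by apply: eq_bigr => gh _; rewrite !ffunE.
Qed.

HB.instance Definition _ :=
  GRing.isZmodMorphism.Build _ _ (chain2_map f) chain2_map_is_zmod_morphism.

Lemma chain2_mapE (z : chain2 T) xy :
  chain2_map f z xy = pairing (fun gh => ((f gh.1, f gh.2) == xy)%:R) z.
Proof.
rewrite ffunE big_mkcond; apply: eq_bigr => gh _.
by case: eqP; rewrite mulrzz ?mul1r ?mul0r.
Qed.

Lemma chain2_map_delta (g h : T) : chain2_map f (chain_delta (g, h)) = chain_delta (f g, f h).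
Proof. by apply/ffunP => xy; rewrite chain2_mapE pairing_delta ffunE. Qed.

Lemma pairing_chain2_map (V : zmodType) (F : T' * T' -> V) (z : chain2 T) :
  pairing F (chain2_map f z) = pairing (fun gh => F (f gh.1, f gh.2)) z.
Proof.
by rewrite pairing_adjoint; apply: eq_bigr => -[g h] _; rewrite /= chain2_map_delta pairing_delta.
Qed.

End ChainMap.

Section Supports.
Variables (T : finGroupType) (Q : {set T}).

Lemma supp2B z z' : supp2 Q z -> supp2 Q z' -> supp2 Q (z - z').
Proof.
move=> sz sz' gh; rewrite !ffunE.
by have [-> | /sz //] := eqVneq (z gh) 0; rewrite sub0r oppr_eq0 => /sz'.
Qed.

Lemma supp2Mn z n : supp2 Q z -> supp2 Q (z *+ n).
Proof.
move=> sz gh; rewrite ffunMnE.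
by have [-> | /sz //] := eqVneq (z gh) 0; rewrite mul0rn eqxx.
Qed.

Lemma supp2_delta g h : g \in Q -> h \in Q -> supp2 Q (chain_delta (g, h)).
Proof.
move=> gQ hQ gh; rewrite ffunE; have [<- _ | _] := eqVneq (g, h) gh; first by rewrite gQ hQ.
by rewrite eqxx.
Qed.

Lemma eq_pairing_supp2 (V : zmodType) (F F' : T * T -> V) z : supp2 Q z ->
  {in Q &, forall g h, F (g, h) = F' (g, h)} -> pairing F z = pairing F' z.
Proof. by move=> sz eqF; apply: (eq_pairing sz) => -[g h] /andP[]; apply: eqF. Qed.

Lemma supp2_chain2_map (T' : finGroupType) (Q' : {set T'}) (f : T -> T') z :
  {in Q, forall g, f g \in Q'} -> supp2 Q z -> supp2 Q' (chain2_map f z).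
Proof.
move=> fQ sz xy; apply: contraR => Q'xy; rewrite chain2_mapE.
rewrite (eq_pairing_supp2 (F' := fun=> 0) sz) => [|g h gQ hQ].
  by rewrite /pairing big1 // => gh _; rewrite mul0rz.
by case: eqP Q'xy => // <-; rewrite /= !fQ.
Qed.

Lemma pairing_bar_d2_chain2_map (T' : finGroupType) (V : zmodType)
    (f : T -> T') (F : T' -> V) (z : chain2 T) :
  {in Q &, {morph f : x y / x * y}} -> supp2 Q z ->
  pairing F (bar_d2 (chain2_map f z)) = pairing (fun x => F (f x)) (bar_d2 z).
Proof.
move=> fM sz; rewrite pairing_bar_d2 pairing_chain2_map pairing_bar_d2.
by apply: (eq_pairing_supp2 sz) => g h gQ hQ /=; rewrite fM.
Qed.

End Supports.

Section QuasiHom.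
Variables (gT : finGroupType) (V : zmodType) (G : {group gT}).
Variables (P : V -> Prop) (d : gT -> V).
Hypotheses (P0 : P 0) (PB : forall u v, P u -> P v -> P (u - v)).
Hypothesis dM : {in G &, forall x y, P (d x + d y - d (x * y))}.

Let eqv u v := P (u - v).

Let eqv_sym u v : eqv u v -> eqv v u.
Proof. by move/(PB P0); rewrite sub0r opprB. Qed.

Let eqv_trans v u w : eqv u v -> eqv v w -> eqv u w.
Proof. by move=> uv /eqv_sym vw; have := PB uv vw; rewrite opprB addrA subrK. Qed.

Let eqvD u u' v v' : eqv u u' -> eqv v v' -> eqv (u + v) (u' + v').
Proof. by move=> uu' vv'; have := PB uu' (eqv_sym vv'); rewrite opprB addrACA -opprD. Qed.

Let eqv0 u : eqv u 0 = P u.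
Proof. by rewrite /eqv subr0. Qed.

Let dmul x y : x \in G -> y \in G -> eqv (d (x * y)) (d x + d y).
Proof. by move=> xG yG; apply/eqv_sym/dM. Qed.

Let d1 : eqv (d 1) 0.
Proof.
have := dmul (group1 G) (group1 G); rewrite mulg1 /eqv opprD addrA subrr sub0r.
by move/(PB P0); rewrite sub0r opprK subr0.
Qed.

Let dV x : x \in G -> eqv (d x^-1 + d x) 0.
Proof.
move=> xG; apply: eqv_trans d1; rewrite -(mulVg x).
by apply/eqv_sym/dmul; rewrite ?groupV.
Qed.

Lemma der1_quasi_hom : {in G^`(1), forall k, P (d k)}.
Proof.
have dcomm x y : x \in G -> y \in G -> eqv (d [~ x, y]) 0.
  move=> xG yG; have xyG := groupM xG yG; have x'y'G := groupM (groupVr xG) (groupVr yG).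
  rewrite commgEl /conjg !mulgA -(mulgA _ x y) -(addr0 0).
  apply: eqv_trans (dmul x'y'G xyG) _.
  apply: eqv_trans (eqvD (dmul (groupVr xG) (groupVr yG)) (dmul xG yG)) _.
  by rewrite addrACA; apply: eqvD; apply: dV.
move=> k; rewrite derg1 => /gen_prodgP[n [c cG ->]]; rewrite -eqv0.
elim: n c cG => [|n IHn] c cG; first by rewrite big_ord0.
have cG' i : c i \in G by case/imset2P: (cG i) => x y xG yG ->; rewrite groupR.
rewrite big_ord_recr /= -(addr0 0).
have cnG : \prod_(i < n) c (widen_ord (leqnSn n) i) \in G.
  by apply: group_prod => i _; apply: cG'.
apply: eqv_trans (dmul cnG (cG' _)) _.
apply: eqvD; first exact: IHn.
by case/imset2P: (cG ord_max) => x y xG yG ->; apply: dcomm.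
Qed.

End QuasiHom.

Section Boundaries.
Variables (T : finGroupType) (G : {group T}).

Lemma der1_bar_d2 k : k \in G^`(1) ->
  exists2 z : chain2 T, supp2 G z & bar_d2 z = chain_delta k - chain_delta 1.
Proof.
move=> kG'; pose P (c : chain1 T) := exists2 z, supp2 G z & bar_d2 z = c.
have P0 : P 0 by exists 0; [move=> gh; rewrite ffunE eqxx | rewrite raddf0].
have PB c c' : P c -> P c' -> P (c - c').
  by move=> [z sz <-] [z' sz' <-]; exists (z - z'); [apply: supp2B | rewrite raddfB].
have dM : {in G &, forall x y, P (chain_delta x + chain_delta y - chain_delta (x * y))}.
  move=> x y xG yG; exists (chain_delta (x, y)); first exact: supp2_delta.
  by rewrite bar_d2_delta addrC addrA.
have [z sz dz] := der1_quasi_hom P0 PB dM kG'.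
exists (z - chain_delta (1, 1)); first exact: supp2B sz (supp2_delta (group1 G) (group1 G)).
by rewrite raddfB /= dz bar_d2_delta mulg1 subrr add0r.
Qed.
End Boundaries.

Section Cone.
Variables (T : finGroupType) (Q : {group T}).

Definition bar_cone (w : chain2 T) : chain3 T :=
  [ffun t => if t.1.1 \in Q then w (t.1.2, t.2) else 0].

Lemma pairing_bar_cone (V : zmodType) (F : T * T * T -> V) w :
  pairing F (bar_cone w) = \sum_(g in Q) pairing (fun ab => F (g, ab.1, ab.2)) w.
Proof.
rewrite /pairing.
transitivity (\sum_(gh : T * T) \sum_(b : T) F (gh, b) *~ bar_cone w (gh, b)).
  by rewrite [RHS]pair_bigA; apply: eq_bigr => -[].
transitivity (\sum_(g : T) \sum_(a : T) \sum_(b : T) F (g, a, b) *~ bar_cone w (g, a, b)).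
  by rewrite [RHS]pair_bigA; apply: eq_bigr => -[].
rewrite [RHS]big_mkcond; apply: eq_bigr => g _; case: ifP => gQ; last first.
  by rewrite big1 // => a _; rewrite big1 // => b _; rewrite ffunE gQ mulr0z.
by rewrite pair_bigA; apply: eq_bigr => -[a b] _; rewrite ffunE gQ.
Qed.

Lemma sum_mem_eq x : \sum_(g in Q) ((g == x)%:R : int) = (x \in Q)%:R.
Proof.
rewrite big_mkcond (bigD1 x) //= big1 ?addr0 => [|g /negbTE->]; last by case: ifP.
by rewrite eqxx; case: (x \in Q).
Qed.

Lemma sum_mem_mulg_eq x a : a \in Q -> \sum_(g in Q) (((g * a)%g == x)%:R : int) = (x \in Q)%:R.
Proof.
move=> aQ; under eq_bigr do rewrite (canF_eq (mulgK a)).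
by rewrite sum_mem_eq groupMr ?groupV.
Qed.

(* At (x, y), d3 (bar_cone w) is |Q| w (x, y) - (x \in Q) (d2 w) y: the cone
   of a cycle bounds |Q| times it. *)
Lemma boundary2_card w : cycle2 Q w -> boundary2 Q (w *+ #|Q|).
Proof.
move=> [sw dw]; exists (bar_cone w); split.
  move=> t; rewrite ffunE; case: ifP => [tQ /sw/andP[aQ bQ] | _]; last by rewrite eqxx.
  by apply/and3P.
apply/ffunP => -[x y]; rewrite bar_d3E pairing_bar_cone -pairing_sumF ffunMnE.
pose F' (ab : T * T) := (#|Q|%:R * ((x, y) == ab)%:R - (x \in Q)%:R
  * ((ab.2 == y)%:R - ((ab.1 * ab.2)%g == y)%:R + (ab.1 == y)%:R) : int)%R.
rewrite (eq_pairing_supp2 (F' := F') sw) => [|a b aQ bQ].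
  rewrite pairingBF !pairingMF pairing_indicator -bar_d2E dw ffunE mulr0 subr0.
  by rewrite mulr_natl.
rewrite /F' /= sumrB big_split sumrB /= sumr_const.
under [X in (_ - X + _ - _)%R]eq_bigr do rewrite xpair_eqE -mulnb natrM.
under [X in (_ + X - _)%R]eq_bigr do rewrite xpair_eqE -mulnb natrM.
under [X in (_ - X)%R]eq_bigr do rewrite xpair_eqE -mulnb natrM.
rewrite -!mulr_suml sum_mem_mulg_eq // !sum_mem_eq eq_sym.
ring.
Qed.

End Cone.

(** * Transgression *)

Section Transgression.
Variables (A : zmodType) (gT : finGroupType) (G K : {group gT}) (phi : gT -> A).
Hypotheses (nKG : K <| G) (hphi : hom_on K phi).
Hypothesis phiJ : {in K & G, forall k g, phi (k ^ g) = phi k}.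

Definition factor_set (a b : coset_of K) : gT := repr a * repr b * (repr (a * b))^-1.

Definition transgression_cocycle (ab : coset_of K * coset_of K) : A :=
  phi (factor_set ab.1 ab.2).

Definition transversal_defect (g : gT) : A := phi (repr (coset K g) * g^-1).

Local Notation tc := transgression_cocycle.
Local Notation psi := transversal_defect.

Lemma factor_set_mem a b : factor_set a b \in K.
Proof.
have Na := repr_coset_norm a; have Nb := repr_coset_norm b.
have Nab := repr_coset_norm (a * b).
apply: coset_idr; first by rewrite !groupM ?groupV.
by rewrite !morphM ?morphV ?groupM ?groupV //= !coset_reprK (coset_reprK (a * b)) mulgV.
Qed.

Lemma transversal_defect_mem g : g \in 'N(K) -> repr (coset K g) * g^-1 \in K.
Proof.
move=> Ng; have Nr := repr_coset_norm (coset K g).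
by apply: coset_idr; rewrite ?groupM ?groupV // morphM ?morphV ?groupV //= coset_reprK mulgV.
Qed.

Lemma transgression_cocycleP a b c : a \in G / K ->
  tc (b, c) - tc (a * b, c) + tc (a, b * c) - tc (a, b) = 0.
Proof.
move=> aGK; have raG : repr a \in G.
  by rewrite -(quotientGK nKG); apply/morphpreP; rewrite repr_coset_norm /= coset_reprK.
have fsJ : factor_set b c ^ (repr a)^-1 \in K.
  by rewrite memJ_norm ?groupV ?repr_coset_norm ?factor_set_mem.
have e : factor_set a b * factor_set (a * b) c
    = factor_set b c ^ (repr a)^-1 * factor_set a (b * c).
  by rewrite /factor_set /conjg invgK mulgA !mulgA !mulgKV.
have := congr1 phi e; rewrite hphi ?factor_set_mem // [in RHS]hphi ?factor_set_mem //.
by rewrite phiJ ?groupV ?factor_set_mem // => E; apply/eqP; rewrite subr_eq0 addrAC subr_eq -E.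
Qed.

Lemma transgression_coboundary g h : g \in G -> h \in G ->
  tc (coset K g, coset K h) = psi h - psi (g * h) + psi g.
Proof.
move=> gG hG; have [Ng Nh] := (subsetP (normal_norm nKG) g gG, subsetP (normal_norm nKG) h hG).
have e : factor_set (coset K g) (coset K h) = (repr (coset K g) * g^-1)
   * (repr (coset K h) * h^-1) ^ g^-1 * (repr (coset K (g * h)) * (g * h)^-1)^-1.
  by rewrite /factor_set morphM // /conjg invgK !invMg !invgK !mulgA !mulgKV.
have uK := transversal_defect_mem Ng; have vK := transversal_defect_mem Nh.
have wK := transversal_defect_mem (groupM Ng Nh).
have vJK : (repr (coset K h) * h^-1) ^ g^-1 \in K by rewrite memJ_norm ?groupV.
rewrite /tc /= e hphi ?groupV ?(groupM uK vJK) // hphi // phiJ ?groupV // (hom_onV hphi) //.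
by rewrite /transversal_defect [RHS]addrC addrA.
Qed.

Lemma pairing_transgression_bar_d3 b : supp3 (G / K) b -> pairing tc (bar_d3 b) = 0.
Proof.
move=> sb; rewrite pairing_bar_d3 (eq_pairing (F' := fun=> 0) sb).
  by rewrite /pairing big1 // => t _; rewrite mul0rz.
by move=> -[[a b'] c] /and3P[aGK _ _]; apply: transgression_cocycleP.
Qed.

Lemma pairing_transgression_chain2_map z : supp2 G z ->
  pairing tc (chain2_map (coset K) z) = pairing psi (bar_d2 z).
Proof.
move=> sz; rewrite pairing_chain2_map pairing_bar_d2.
by apply: (eq_pairing_supp2 sz) => g h gG hG; apply: transgression_coboundary.
Qed.

Lemma transversal_defect_id k : k \in K -> psi k = - phi k.
Proof. by move=> kK; rewrite /psi coset_id // repr_coset1 mul1g (hom_onV hphi). Qed.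

End Transgression.

Section HomDer1Vanishing.
Variables (p : nat) (A : zmodType) (gT : finGroupType) (G K : {group gT}) (phi : gT -> A).
Hypotheses (hA : hypothesis_p p A) (nKG : K <| G) (hphi : hom_on K phi).
Hypothesis phiJ : {in K & G, forall k g, phi (k ^ g) = phi k}.
Hypothesis hH2 : H2_p_part_trivial p (G / K) \/ coinflation_p_surjective p G K.

Local Notation tc := (transgression_cocycle phi).
Let tc_bar_d3 := pairing_transgression_bar_d3 nKG hphi phiJ.
Let tc_chain2_map := pairing_transgression_chain2_map nKG hphi phiJ.

Lemma pairing_transgression_p_primary w : cycle2 (G / K) w ->
  p_primary_class p (G / K) w -> pairing tc w = 0.
Proof.
move=> cw pw; case: hH2 => [H2p | alpha_p].
  have [b [sb <-]] := H2p w cw pw; exact: tc_bar_d3.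
have [z [[sz dz] _ [b [sb db]]]] := alpha_p w cw pw.
have := tc_bar_d3 sb; rewrite db raddfB /=.
by rewrite tc_chain2_map // dz raddf0 sub0r => /eqP; rewrite oppr_eq0 => /eqP.
Qed.

Lemma hom_on_der1_eq0 : {in K :&: G^`(1), forall k, phi k = 0}.
Proof.
move=> k /setIP[kK kG'].
have nKG' := subsetP (normal_norm nKG).
have [z sz dz] := der1_bar_d2 kG'.
set w := chain2_map (coset K) z.
have cw : cycle2 (G / K) w.
  split; first by apply: supp2_chain2_map sz => g; apply: mem_quotient.
  apply/ffunP => x; rewrite -pairing_indicator (pairing_bar_d2_chain2_map _ _ sz).
    by rewrite dz raddfB /= !pairing_delta coset_id // morph1 subrr ffunE.
  by move=> g h gG hG; rewrite /= morphM ?nKG'.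
pose q := (#|G / K|`_p^')%N.
have cwq : cycle2 (G / K) (w *+ q).
  by case: cw => sw dw; split; [apply: supp2Mn | rewrite raddfMn /= dw mul0rn].
have pwq : p_primary_class p (G / K) (w *+ q).
  exists (logn p #|G / K|); rewrite -mulrnA -p_part mulnC partnC //.
  exact: boundary2_card cw.
have phi_q : phi k *+ q = 0.
  have := pairing_transgression_p_primary cwq pwq.
  rewrite raddfMn /= tc_chain2_map // dz raddfB /= !pairing_delta.
  rewrite (transversal_defect_id hphi kK) (transversal_defect_id hphi (group1 K)).
  by rewrite (hom_on1 hphi) oppr0 subr0 mulNrn => /eqP; rewrite oppr_eq0 => /eqP.
have phi_p := torsion_p_part hA (cardG_gt0 K) (hom_on_natmul_card hphi kK).
apply: natmul_coprime_eq0 (part_gt0 p #|K|) _ phi_p phi_q.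
exact: pnat_coprime (part_pnat _ _) (part_pnat _ _).
Qed.

End HomDer1Vanishing.

(** * Subdirect products *)

Section SubdirectProduct.
Variables (gT1 gT2 : finGroupType) (G : {group gT1}) (H : {group gT2}).
Variables (U : {group gT1 * gT2}) (A : zmodType) (f : gT1 * gT2 -> A).
Hypotheses (sUGH : U \subset setX G H) (pr1U : fst @: U = G) (pr2U : snd @: U = H).
Hypothesis hf : hom_on U f.

Lemma mem_k1 k : (k \in k1 U) = ((k, 1) \in U).
Proof. by rewrite inE. Qed.

Lemma group_set_k1 : group_set (k1 U).
Proof.
apply/group_setP; split=> [|x y]; rewrite !mem_k1 ?group1 // => xU yU.
by rewrite -[1]mulg1 -[(_, _)]/((x, 1) * (y, 1)) groupM.
Qed.

Canonical k1_group := group group_set_k1.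

Let mem_U (g : gT1) (h : gT2) : (g, h) \in U -> g \in G /\ h \in H.
Proof. by move/(subsetP sUGH); rewrite inE => /andP. Qed.

Let lift1 g : g \in G -> exists h, (g, h) \in U.
Proof. by rewrite -pr1U => /imsetP[[g' h] ghU ->]; exists h. Qed.

Let lift2 h : h \in H -> exists g, (g, h) \in U.
Proof. by rewrite -pr2U => /imsetP[[g h'] ghU ->]; exists g. Qed.

Lemma k1_conj k g : k \in k1 U -> g \in G -> exists2 u, u \in U & ((k, 1) ^ u = (k ^ g, 1))%g.
Proof. by move=> kK /lift1[h ghU]; exists (g, h) => //; congr (_, _); apply: conj1g. Qed.

Lemma k1_normal : k1 U <| G.
Proof.
apply/andP; split; first by apply/subsetP => k; rewrite mem_k1 => /mem_U[].
apply/subsetP => g gG; rewrite inE; apply/subsetP => _ /imsetP[k kK ->].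
by rewrite mem_k1; have [u uU <-] := k1_conj kK gG; rewrite groupJ -?mem_k1.
Qed.

Lemma hom_on_k1 : hom_on (k1 U) (fun k => f (k, 1)).
Proof. by move=> x y; rewrite !mem_k1 => xU yU; rewrite -hf // -{1}(mulg1 (1 : gT2)). Qed.

Lemma k1_conj_invariant : {in k1 U & G, forall k g, f (k ^ g, 1) = f (k, 1)}.
Proof.
move=> k g kK gG; have [u uU <-] := k1_conj kK gG.
by rewrite (hom_onJ hf) -?mem_k1.
Qed.

Lemma extend_subdirect (F1 : gT1 -> A) :
  hom_on G F1 -> {in k1 U, F1 =1 (fun k => f (k, 1))} ->
  exists F : gT1 * gT2 -> A, hom_on (setX G H) F /\ {in U, F =1 f}.
Proof.
move=> hF1 F1K.
pose F2 h := if [pick g | (g, h) \in U] is Some g then f (g, h) - F1 g else 0.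
have F2E g h : (g, h) \in U -> F2 h = f (g, h) - F1 g.
  rewrite /F2 => ghU; case: pickP => [g' g'hU | /(_ g)]; last by rewrite ghU.
  have [[gG _] [g'G _]] := (mem_U ghU, mem_U g'hU).
  have kK : g * g'^-1 \in k1 U.
    rewrite mem_k1 (_ : (_, _) = (g, h) * (g', h)^-1) ?groupM ?groupV //.
    by congr (_, _); rewrite mulgV.
  have -> : (g, h) = (g * g'^-1, 1) * (g', h) by congr (_, _); rewrite ?mulgKV ?mul1g.
  rewrite hf -?mem_k1 // -{2}(mulgKV g' g) hF1 ?groupM ?groupV // (F1K _ kK).
  by rewrite opprD addrACA subrr add0r.
exists (fun u => F1 u.1 + F2 u.2); split; last first.
  by move=> [g h] ghU /=; rewrite (F2E _ _ ghU) addrC subrK.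
move=> [x1 y1] [x2 y2]; rewrite !inE /= => /andP[x1G y1H] /andP[x2G y2H].
have [[g1 g1U] [g2 g2U]] := (lift2 y1H, lift2 y2H).
have [[g1G _] [g2G _]] := (mem_U g1U, mem_U g2U).
have g12U : (g1 * g2, y1 * y2) \in U by rewrite -[(_, _)]/((g1, y1) * (g2, y2)) groupM.
rewrite hF1 // (F2E _ _ g12U) (F2E _ _ g1U) (F2E _ _ g2U).
rewrite -[(g1 * g2, _)]/((g1, y1) * (g2, y2)) hf // hF1 //.
by rewrite [RHS]addrACA opprD [_ + (_ - _)]addrACA.
Qed.

End SubdirectProduct.

Theorem theorem1p2 (p : nat) (gT1 gT2 : finGroupType)
  (G : {group gT1}) (H : {group gT2}) (U : {group gT1 * gT2}) :
  prime p ->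
  U \subset setX G H ->
  fst @: U = G -> snd @: U = H ->
  (H2_p_part_trivial p (G / k1 U)%g \/ coinflation_p_surjective p G (k1 U)) ->
  p_extensible p G H U.
Proof.
move=> _ sUGH pr1U pr2U hH2 A hA f hf.
have nKG := k1_normal sUGH pr1U.
have phiJ := k1_conj_invariant pr1U hf.
have phi_G' := hom_on_der1_eq0 hA nKG (hom_on_k1 hf) phiJ hH2.
have [F1 [hF1 F1K]] := hom_on_extend hA (normal_sub nKG) (hom_on_k1 hf) phi_G'.
by apply: (extend_subdirect sUGH pr2U hf hF1) => k; apply: F1K.
Qed.
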